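(* Let $n\ge3$ and $L\cong\mathbf{2}^n$ be a Boolean lattice. Then the strong metric dimension of its zero-divisor graph is $\mathrm{sdim}_M(G(L))=2^n-2n$.
   Context: The zero-divisor graph $G(L)$ of a lattice $L$ with $0$ has as vertices the nonzero $a\in L$ such that $a\wedge b=0$ for some nonzero $b$, with distinct vertices adjacent iff their meet is $0$. In a connected graph $G$, $w$ strongly resolves $u,v$ if some shortest $u$–$w$ path contains $v$ or some shortest $v$–$w$ path contains $u$; $\mathrm{sdim}_M(G)$ is the minimum size of a set $W$ of vertices such that every pair of vertices is strongly resolved by some vertex of $W$. *)

From HB Require Import structures.
From mathcomp Require Import all_boot all_order.
Set Implicit Arguments.
Unset Strict Implicit.
Unset Printing Implicit Defensive.
Import Order.Theory.

Section Graphs.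
Variable T : finType.

(* A finite simple graph is given by a vertex set V : {set T} and a
   symmetric irreflexive adjacency relation e (only used on V). *)

Definition walk (V : {set T}) (e : rel T) (u w : T) (p : seq T) : bool :=
  [&& path e u p, last u p == w & all (fun x => x \in V) (u :: p)].

Definition shortest_path (V : {set T}) (e : rel T) (u w : T) (p : seq T) : Prop :=
  walk V e u w p /\ forall q, walk V e u w q -> size p <= size q.

Definition strongly_resolves (V : {set T}) (e : rel T) (w u v : T) : Prop :=
  (exists p, shortest_path V e u w p /\ v \in u :: p) \/
  (exists p, shortest_path V e v w p /\ u \in v :: p).

Definition strong_resolving_set (V : {set T}) (e : rel T) (W : {set T}) : Prop :=
  W \subset V /\
  forall u v, u \in V -> v \in V -> u != v ->
    exists2 w, w \in W & strongly_resolves V e w u v.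

Definition is_sdim (V : {set T}) (e : rel T) (k : nat) : Prop :=
  (exists W, strong_resolving_set V e W /\ #|W| = k) /\
  (forall W, strong_resolving_set V e W -> k <= #|W|).

End Graphs.

Section ZeroDivisorGraph.
Context {d : Order.disp_t} (L : finTBLatticeType d).
Local Open Scope order_scope.

Definition zdg_vertices : {set L} :=
  [set a : L | (a != \bot) && [exists b : L, (b != \bot) && (a `&` b == \bot)]].

Definition zdg_adj : rel L := fun a b => (a != b) && (a `&` b == \bot).

End ZeroDivisorGraph.

Arguments zdg_vertices {d} L.
Arguments zdg_adj {d} L.

(* An order isomorphism L ~ 2^n carries G(L) onto the graph of the proper
   nonempty subsets of an n-set, adjacent when disjoint, which has diameter 3.
   If B meets A without being contained in it, B can lie on a geodesic from A
   only as its endpoint; hence two such vertices are strongly resolved only by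
   one of themselves, and the vertices outside a strong resolving set form a
   laminar family.  Together with the whole set it has at most 2n - 1 members,
   so sdim >= (2^n - 2) - (2n - 2).  Conversely, the complement of the laminar
   family of the n singletons and the n - 2 initial segments {0, ..., k - 1},
   2 <= k < n, is strongly resolving: every pair of these sets lies on an
   explicit geodesic of length 2 or 3 ending at a vertex outside the family. *)

From mathcomp Require Import all_boot all_order zify.
Set Implicit Arguments.
Unset Strict Implicit.
Unset Printing Implicit Defensive.
(* [{set T}] is ordered by inclusion, so that [zdg_vertices {set T}] is G(2^T). *)
Import Order.Theory Order.DefaultSetSubsetOrder.

Section Laminar.
Variable T : finType.
Implicit Types (x : T) (A B S : {set T}) (F : {set {set T}}).

Definition laminar F :=
  {in F &, forall A B, A :&: B != set0 -> (A \subset B) || (B \subset A)}.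

Lemma laminar_setU1T F : laminar F -> laminar (setT |: F).
Proof.
move=> lamF A B /setU1P[-> _ _|AF /setU1P[-> _|BF]]; rewrite ?subsetT ?orbT //.
exact: lamF.
Qed.

Lemma laminar_imset_setD1 F x : laminar F -> laminar ([set A :\ x | A in F] :\ set0).
Proof.
move=> lamF _ _ /setD1P[_ /imsetP[A AF ->]] /setD1P[_ /imsetP[B BF ->]].
case/set0Pn=> z /setIP[/setD1P[_ zA] /setD1P[_ zB]].
have /orP[AB|BA] : (A \subset B) || (B \subset A).
  by apply: lamF => //; apply/set0Pn; exists z; apply/setIP.
- by rewrite (setSD _ AB).
- by rewrite (setSD _ BA) orbT.
Qed.

Lemma laminar_setD1_inj F x A1 A2 : laminar F -> set0 \notin F ->
  A1 \in F -> A2 \in F -> A1 :\ x \in F -> A2 :\ x \in F -> x \in A1 -> x \in A2 ->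
  A1 :\ x = A2 :\ x.
Proof.
move=> lamF F0 A1F A2F Y1F Y2F xA1 xA2.
have /orP : (A1 \subset A2) || (A2 \subset A1).
  by apply: lamF => //; apply/set0Pn; exists x; apply/setIP.
wlog A12 : A1 A2 A1F A2F Y1F Y2F xA1 xA2 / A1 \subset A2.
  move=> wlog [A12|A21]; first exact: wlog A12 (or_introl A12).
  by apply/esym; apply: wlog A21 (or_introl A21).
move=> _; have Y12 : A1 :\ x \subset A2 :\ x by rewrite setSD.
have /orP[YA|AY] : (A2 :\ x \subset A1) || (A1 \subset A2 :\ x).
- apply: lamF => //; have /set0Pn[z zY1] : A1 :\ x != set0 by apply: contraNneq F0 => <-.
  by apply/set0Pn; exists z; rewrite inE (subsetP Y12) //; case/setD1P: zY1.
- apply/eqP; rewrite eqEsubset Y12; apply/subsetP=> z zY2.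
  by apply/setD1P; split; [case/setD1P: zY2 | exact: subsetP YA z zY2].
- by have := subsetP AY x xA1; rewrite !inE eqxx.
Qed.

(* Removing [x] is injective on the members containing [x]; among the
   resulting sets at most one is empty and at most one is already in [F]. *)
Lemma laminar_card_setD1 F x : laminar F -> set0 \notin F ->
  #|F| <= #|[set A :\ x | A in F] :\ set0| + 2.
Proof.
move=> lamF F0; set F' := _ :\ set0.
set Fx := [set A : {set T} | x \in A]; set C := F :&: Fx; set N := F :\: Fx.
set D := [set A :\ x | A in C].
have eD : #|D| = #|C|.
  apply: card_in_imset => A B; rewrite !inE => /andP[_ xA] /andP[_ xB] eAB.
  by rewrite -(setD1K xA) -(setD1K xB) eAB.
have NF' : N \subset F'.
  apply/subsetP=> A; rewrite !inE => /andP[xA AF]; rewrite (contraNneq _ F0) => [|<- //].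
  by apply/imsetP; exists A; rewrite // (setDidPl _) // disjoint_sym disjoints1.
have DF' : D :\ set0 \subset F'.
  apply/subsetP=> Y; rewrite !inE => /andP[Y0 /imsetP[A]]; rewrite !inE => /andP[AF _] eY.
  by rewrite Y0 eY; apply/imsetP; exists A.
have ND : #|N :&: (D :\ set0)| <= 1.
  apply/card_le1_eqP=> Y1 Y2; rewrite !inE => /and3P[/andP[_ Y1F] _ /imsetP[A1]].
  rewrite !inE => /andP[A1F xA1] eY1 /and3P[/andP[_ Y2F] _ /imsetP[A2]].
  rewrite !inE => /andP[A2F xA2] eY2; rewrite eY1 eY2 in Y1F Y2F *.
  exact: (laminar_setD1_inj lamF F0).
have eF : #|F| = #|C| + #|N| by rewrite cardsID.
have eD0 : #|D| = (set0 \in D) + #|D :\ set0| by rewrite -cardsD1.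
have eND : #|N :|: (D :\ set0)| + #|N :&: (D :\ set0)| = #|N| + #|D :\ set0|.
  exact: cardsUI.
have ND' : #|N :|: (D :\ set0)| <= #|F'| by apply/subset_leq_card; rewrite subUset NF'.
have := leq_b1 (set0 \in D); lia.
Qed.

Lemma card_powerset_setD0 S : #|powerset S :\ set0| = (2 ^ #|S|).-1.
Proof.
by rewrite -card_powerset (cardsD1 set0 (powerset S)) powersetE sub0set.
Qed.

Lemma laminar_card_le S F : F \subset powerset S :\ set0 -> laminar F ->
  #|F| <= (2 * #|S|).-1.
Proof.
have [m] := ubnP #|S|; elim: m S F => // m IH S F ltSm FS lamF.
have F0 : set0 \notin F.
  by apply: contraTN FS => F0; apply/subsetPn; exists set0; rewrite // !inE eqxx.
have [S1|S2] := leqP #|S| 1.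
  by move: (subset_leq_card FS); rewrite card_powerset_setD0; case: #|S| S1 => [|[|]].
have [x xS] : exists x, x \in S by apply/set0Pn; rewrite -card_gt0; lia.
have eS : #|S| = #|S :\ x|.+1 by rewrite (cardsD1 x S) xS.
pose F' : {set {set T}} := [set A :\ x | A in F] :\ set0.
have F'S : F' \subset powerset (S :\ x) :\ set0.
  apply/subsetP=> Y /setD1P[Y0 /imsetP[A AF eY]]; rewrite !inE Y0 eY setSD //.
  by have := subsetP FS A AF; rewrite !inE => /andP[_].
have ltS'm : #|S :\ x| < m by lia.
have le_F_F' : #|F| <= #|F'| + 2 := laminar_card_setD1 x lamF F0.
have := IH _ _ ltS'm F'S (laminar_imset_setD1 (x := x) lamF).
rewrite -!subn1; lia.
Qed.

End Laminar.

Section Walks.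
Variables (T : finType) (V : {set T}) (e : rel T).
Implicit Types (u w y : T) (p q r : seq T).

Lemma walk_nil u w : walk V e u w [::] = (u \in V) && (u == w).
Proof. by rewrite /walk /= andbT andbC. Qed.

Lemma walk_cons u w x p : walk V e u w (x :: p) = [&& e u x, u \in V & walk V e x w p].
Proof. by rewrite /walk /=; case: (e u x); case: (u \in V); rewrite ?andbF. Qed.

Lemma strongly_resolves_sym w u v :
  strongly_resolves V e w u v -> strongly_resolves V e w v u.
Proof. by case=> ?; [right|left]. Qed.

Lemma walk_endpoints u w p : walk V e u w p -> u \in V /\ w \in V.
Proof.
case/and3P=> _ /eqP <- /allP Vp; split; first exact: Vp (mem_head u p).
exact: Vp (mem_last u p).
Qed.

Lemma walk_cat u y w q r : walk V e u y q -> walk V e y w r -> walk V e u w (q ++ r).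
Proof.
case/and3P=> eq /eqP yq /= /andP[uV Vq] /and3P[er /eqP wr /= /andP[_ Vr]].
by rewrite /walk cat_path last_cat yq eq er wr eqxx /= all_cat uV Vq Vr.
Qed.

Lemma walk_catP u w q r : walk V e u w (q ++ r) ->
  walk V e u (last u q) q /\ walk V e (last u q) w r.
Proof.
rewrite /walk cat_path last_cat -cat_cons all_cat => /and3P[/andP[eq er] wr /andP[Vq Vr]].
split; apply/and3P; split=> //=.
by rewrite Vr (allP Vq _ (mem_last u q)).
Qed.

Lemma shortest_path_prefix u w q r : shortest_path V e u w (q ++ r) ->
  shortest_path V e u (last u q) q.
Proof.
case=> /walk_catP[wq wr] qr_min; split=> // q' wq'.
by have := qr_min _ (walk_cat wq' wr); rewrite !size_cat leq_add2r.
Qed.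

Lemma exists_shortest_path u w p : walk V e u w p -> exists q, shortest_path V e u w q.
Proof.
move=> wp; have ex_walk : exists k, [exists q : k.-tuple T, walk V e u w q].
  by exists (size p); apply/existsP; exists (in_tuple p).
case: (ex_minnP ex_walk) => k /existsP[q wq] k_min; exists q; split=> // r wr.
by rewrite size_tuple k_min //; apply/existsP; exists (in_tuple r).
Qed.

End Walks.

Section GraphIsomorphism.
Variables (T T' : finType) (g : T -> T') (V : {set T}) (e : rel T) (e' : rel T').
Hypotheses (g_bij : bijective g) (g_adj : forall x y, e' (g x) (g y) = e x y).

Let g_inj : injective g := bij_inj g_bij.
Let V' := g @: V.

Lemma walk_map u w p : walk V' e' (g u) (g w) (map g p) = walk V e u w p.
Proof.
rewrite /walk path_map last_map (inj_eq g_inj) -map_cons all_map.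
by rewrite (eq_path g_adj) (eq_all (fun x => mem_imset _ x g_inj)).
Qed.

Lemma shortest_path_map u w p :
  shortest_path V' e' (g u) (g w) (map g p) <-> shortest_path V e u w p.
Proof.
have [h gK hK] := g_bij.
rewrite /shortest_path walk_map size_map; split=> -[wp p_min]; split=> // q wq.
  by rewrite -(size_map g q); apply: p_min; rewrite walk_map.
by rewrite -(mapK hK q) size_map p_min // -walk_map (mapK hK).
Qed.

Lemma strongly_resolves_map w u v :
  strongly_resolves V' e' (g w) (g u) (g v) <-> strongly_resolves V e w u v.
Proof.
have [h gK hK] := g_bij.
have through x y : (exists p, shortest_path V' e' (g x) (g w) p /\ g y \in g x :: p) <->
    (exists p, shortest_path V e x w p /\ y \in x :: p).
  split=> -[p [sp yp]]; last first.
    by exists (map g p); rewrite shortest_path_map -map_cons mem_map.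
  exists (map h p); rewrite -shortest_path_map (mapK hK).
  by rewrite -(mapK hK p) -map_cons mem_map in yp.
by split=> -[/through ?|/through ?]; [left|right|left|right].
Qed.

Lemma strong_resolving_set_map (W : {set T}) :
  strong_resolving_set V' e' (g @: W) <-> strong_resolving_set V e W.
Proof.
split=> -[WV resW]; split.
- by apply/subsetP=> x xW; rewrite -(mem_imset _ _ g_inj) (subsetP WV) ?imset_f.
- move=> u v uV vV uv; have guv : g u != g v by rewrite (inj_eq g_inj).
  have [_ /imsetP[w wW ->] res] := resW _ _ (imset_f g uV) (imset_f g vV) guv.
  by exists w => //; apply/strongly_resolves_map.
- exact: imsetS.
- move=> _ _ /imsetP[u uV ->] /imsetP[v vV ->]; rewrite (inj_eq g_inj) => uv.
  have [w wW res] := resW u v uV vV uv.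
  by exists (g w); [exact: imset_f | apply/strongly_resolves_map].
Qed.

Lemma is_sdim_map k : is_sdim V' e' k -> is_sdim V e k.
Proof.
have [h gK hK] := g_bij.
case=> -[W' [resW' cardW']] min_k; split=> [|W resW].
  exists (h @: W'); split; last by rewrite card_imset //; exact: can_inj hK.
  by apply/strong_resolving_set_map; rewrite -imset_comp (eq_imset _ hK) imset_id.
by rewrite -(card_imset W g_inj); apply/min_k/strong_resolving_set_map.
Qed.

End GraphIsomorphism.

Section OrderIsomorphism.
Context {d d' : Order.disp_t} (L : finTBLatticeType d) (L' : finTBLatticeType d').
Variable f : L -> L'.
Hypotheses (f_bij : bijective f) (f_mono : {mono f : x y / (x <= y)%O}).
Local Open Scope order_scope.

Let f_inj : injective f := bij_inj f_bij.

Lemma order_iso_bot : f \bot = \bot.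
Proof.
have [h fK hK] := f_bij.
by apply/le_anti; rewrite le0x andbT -[X in _ <= X]hK f_mono le0x.
Qed.

Lemma order_iso_meet x y : f (x `&` y) = f x `&` f y.
Proof.
have [h fK hK] := f_bij.
apply/le_anti; rewrite lexI !f_mono leIl leIr /=.
by rewrite -[f x `&` f y]hK f_mono lexI -!f_mono hK leIl leIr.
Qed.

Lemma zdg_adj_order_iso x y : zdg_adj L' (f x) (f y) = zdg_adj L x y.
Proof. by rewrite /zdg_adj -order_iso_meet -order_iso_bot !(inj_eq f_inj). Qed.

Lemma zdg_vertices_order_iso : zdg_vertices L' = f @: zdg_vertices L.
Proof.
have [h fK hK] := f_bij.
apply/setP=> y; have [x ->] : exists x, y = f x by exists (h y).
rewrite mem_imset // !inE -order_iso_bot (inj_eq f_inj); congr (_ && _).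
apply/existsP/existsP=> -[b bP]; last first.
  by exists (f b); rewrite -order_iso_meet !(inj_eq f_inj).
by exists (h b); rewrite -!(inj_eq f_inj) order_iso_meet hK.
Qed.

Lemma is_sdim_zdg_order_iso k :
  is_sdim (zdg_vertices L') (zdg_adj L') k -> is_sdim (zdg_vertices L) (zdg_adj L) k.
Proof.
rewrite zdg_vertices_order_iso => sdim_k.
exact: (is_sdim_map f_bij zdg_adj_order_iso sdim_k).
Qed.

End OrderIsomorphism.

Section SubsetGraph.
Variable T : finType.
Implicit Types (A B C D X Y : {set T}) (p q : seq {set T}).

Local Notation V := (zdg_vertices {set T}).
Local Notation E := (zdg_adj {set T}).
Local Notation walk := (walk V E).
Local Notation shortest_path := (shortest_path V E).

Lemma in_zdg_vertices_set A : (A \in V) = (A != set0) && (A != setT).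
Proof.
rewrite /zdg_vertices inE; congr (_ && _); apply/existsP/idP=> [[B /andP[B0 /eqP AB]]|AT].
  by apply: contraNneq B0 => AT; rewrite -(setTI B) -AT; apply/eqP.
exists (~: A); apply/andP; split; last exact/eqP/setICr.
by apply: contra_neq AT => CA0; rewrite -[A]setCK CA0 setC0.
Qed.

Lemma zdg_vertex_neq0 A : A \in V -> A != set0.
Proof. by rewrite in_zdg_vertices_set => /andP[]. Qed.

Lemma zdg_adj_set A B : E A B = (A != B) && [disjoint A & B].
Proof. by rewrite -setI_eq0. Qed.

Lemma setC_zdg_vertex A : A \in V -> ~: A \in V.
Proof.
by rewrite !in_zdg_vertices_set !(can2_eq (@setCK _) (@setCK _)) setC0 setCT andbC.
Qed.

Lemma zdg_adj_disjoint A B : A \in V -> [disjoint A & B] -> E A B.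
Proof.
rewrite in_zdg_vertices_set zdg_adj_set => /andP[A0 _] AB; rewrite AB andbT.
by apply: contraNneq A0 => eAB; rewrite -setI_eq0 -eAB setIid in AB.
Qed.

Lemma size_walk_meet A B p : walk A B p -> A != B -> ~~ [disjoint A & B] -> 1 < size p.
Proof.
case: p => [|C [|? ?]] //; first by rewrite walk_nil => /andP[_ ->].
by rewrite walk_cons walk_nil zdg_adj_set => /and4P[/andP[_ dAC] _ _ /eqP <-]; rewrite dAC.
Qed.

Lemma size_walk_cover A B p : walk A B p -> ~~ [disjoint A & B] -> A :|: B = setT ->
  2 < size p.
Proof.
move=> wp AB ABT; have [AV _] := walk_endpoints wp.
have AneB : A != B.
  by apply: contraTneq AV => eAB; rewrite in_zdg_vertices_set -ABT -eAB setUid eqxx andbF.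
have := size_walk_meet wp AneB AB.
case: p wp => [|C [|D [|? ?]]] // + _.
rewrite !walk_cons walk_nil !zdg_adj_set.
case/and5P=> /andP[_ dAC] _ /andP[_ dCB] CV /andP[_ /eqP eDB].
have : C \subset ~: (A :|: B).
  by rewrite setCU subsetI -!disjoints_subset disjoint_sym dAC -eDB dCB.
by rewrite ABT setCT subset0 => /eqP C0; rewrite C0 in_zdg_vertices_set eqxx in CV.
Qed.

Lemma walk_disjoint2 A C B : A \in V -> C \in V -> B \in V ->
  [disjoint A & C] -> [disjoint C & B] -> walk A B [:: C; B].
Proof.
move=> AV CV BV dAC dCB; rewrite !walk_cons walk_nil AV CV BV eqxx.
by rewrite (zdg_adj_disjoint AV dAC) (zdg_adj_disjoint CV dCB).
Qed.

Lemma walk_disjoint3 A C D B : A \in V -> C \in V -> D \in V -> B \in V ->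
  [disjoint A & C] -> [disjoint C & D] -> [disjoint D & B] -> walk A B [:: C; D; B].
Proof.
move=> AV CV DV BV dAC dCD dDB; rewrite !walk_cons walk_nil AV CV DV BV eqxx.
by rewrite (zdg_adj_disjoint AV dAC) (zdg_adj_disjoint CV dCD) (zdg_adj_disjoint DV dDB).
Qed.

Lemma exists_walk_le2 A B : A \in V -> B \in V -> A :|: B != setT ->
  exists2 q, walk A B q & size q <= 2.
Proof.
move=> AV BV ABT; have [<-|AneB] := eqVneq A B.
  by exists [::]; rewrite // walk_nil AV eqxx.
have [dAB|_] := boolP [disjoint A & B].
  by exists [:: B]; rewrite // walk_cons walk_nil AV BV eqxx (zdg_adj_disjoint AV dAB).
exists [:: ~: (A :|: B); B] => //; apply: walk_disjoint2 => //.
- apply: setC_zdg_vertex; rewrite in_zdg_vertices_set ABT setU_eq0 andbT negb_and.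
  by rewrite zdg_vertex_neq0.
- by rewrite disjoints_subset setCK subsetUl.
- by rewrite disjoint_sym disjoints_subset setCK subsetUr.
Qed.

Lemma exists_walk_le3 A B : A \in V -> B \in V -> exists2 q, walk A B q & size q <= 3.
Proof.
move=> AV BV; have [ABT|ABT] := eqVneq (A :|: B) setT; last first.
  by have [q wq /leqW] := exists_walk_le2 AV BV ABT; exists q.
exists [:: ~: A; ~: B; B] => //; apply: walk_disjoint3; rewrite ?setC_zdg_vertex //.
- by rewrite disjoints_subset setCK.
- by rewrite -setI_eq0 -setCU ABT setCT.
- by rewrite disjoints_subset.
Qed.

Lemma shortest_path_disjoint2 A C B : A \in V -> C \in V -> B \in V ->
  [disjoint A & C] -> [disjoint C & B] -> A != B -> ~~ [disjoint A & B] ->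
  shortest_path A B [:: C; B].
Proof.
move=> AV CV BV dAC dCB AneB mAB; split; first exact: walk_disjoint2.
by move=> q /size_walk_meet; apply.
Qed.

Lemma shortest_path_disjoint3 A C D B : A \in V -> C \in V -> D \in V -> B \in V ->
  [disjoint A & C] -> [disjoint C & D] -> [disjoint D & B] ->
  ~~ [disjoint A & B] -> A :|: B = setT -> shortest_path A B [:: C; D; B].
Proof.
move=> AV CV DV BV dAC dCD dDB mAB ABT; split; first exact: walk_disjoint3.
by move=> q /size_walk_cover; apply.
Qed.

(* A successor Y of B on the geodesic would satisfy d(A, Y) = d(A, B) + 1 >= 3;
   but d(A, Y) <= 2 when A :|: B != setT (a point of B :\: A avoids A :|: Y),
   and d(A, B) = 3 is already the diameter otherwise. *)
Lemma shortest_path_mem_endpoint A B W p : A \in V -> A != B -> ~~ [disjoint A & B] ->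
  ~~ (B \subset A) -> shortest_path A W p -> B \in A :: p -> W = B.
Proof.
move=> AV AneB mAB BnA sp; rewrite in_cons eq_sym (negbTE AneB) /= => Bp.
case/splitPr: Bp sp => p1 [|Y p2] sp.
  by case: sp => /and3P[_ /eqP <- _] _; rewrite last_cat.
have spY : shortest_path A Y (p1 ++ [:: B; Y]).
  have := @shortest_path_prefix _ V E A W (p1 ++ [:: B; Y]) p2.
  by rewrite -catA last_cat; apply.
have [wB wY] : walk A B (p1 ++ [:: B]) /\ walk B Y [:: Y].
  have := @walk_catP _ V E A Y (p1 ++ [:: B]) [:: Y].
  by rewrite -catA last_cat; apply; case: spY.
have YV : Y \in V by case: (walk_endpoints wY).
have dBY : [disjoint B & Y] by move: wY; rewrite walk_cons zdg_adj_set => /andP[/andP[]].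
case: spY => _ Y_min; have [ABT|ABT] := eqVneq (A :|: B) setT.
  have [q wq q_le3] := exists_walk_le3 AV YV.
  have := size_walk_cover wB mAB ABT; have := leq_trans (Y_min q wq) q_le3.
  by rewrite !size_cat /=; lia.
have AYT : A :|: Y != setT.
  apply: contra BnA => /eqP AYT; apply/subsetP=> z zB.
  by have := in_setT z; rewrite -AYT inE (disjointFr dBY zB) orbF.
have [q wq q_le2] := exists_walk_le2 AV YV AYT.
have := size_walk_meet wB AneB mAB; have := leq_trans (Y_min q wq) q_le2.
by rewrite !size_cat /=; lia.
Qed.

Lemma laminar_compl_strong_resolving_set W :
  strong_resolving_set V E W -> laminar (V :\: W).
Proof.
case=> _ resW A B /setDP[AV AW] /setDP[BV BW]; rewrite setI_eq0 => mAB.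
apply/negPn/negP=> /norP[nAB nBA].
have AneB : A != B by apply: contraNneq nAB => ->.
have [X XW [[p [sp Bp]]|[p [sp Ap]]]] := resW A B AV BV AneB.
  by rewrite -(shortest_path_mem_endpoint AV AneB mAB nBA sp Bp) XW in BW.
rewrite eq_sym in AneB; rewrite disjoint_sym in mAB.
by rewrite -(shortest_path_mem_endpoint BV AneB mAB nAB sp Ap) XW in AW.
Qed.

Lemma card_zdg_vertices_set : 0 < #|T| -> #|V| = 2 ^ #|T| - 2.
Proof.
rewrite -cardsT card_gt0 => T0.
have -> : V = ~: [set set0; setT].
  by apply/setP=> A; rewrite in_zdg_vertices_set !inE negb_or.
have := cardsC [set set0; [set: T]]; rewrite cards2 -cardsT -powersetT card_powerset.
by rewrite eq_sym T0 => <-; rewrite addKn.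
Qed.

Lemma strong_resolving_set_card_ge W : 0 < #|T| -> strong_resolving_set V E W ->
  2 ^ #|T| - 2 * #|T| <= #|W|.
Proof.
move=> T_gt0 resW; have WV := resW.1.
have lam := laminar_setU1T (laminar_compl_strong_resolving_set resW).
have TV : setT \notin V by rewrite in_zdg_vertices_set eqxx andbF.
have VWT : setT |: (V :\: W) \subset powerset setT :\ set0.
  apply/subsetP=> A; rewrite in_setD1 powersetE subsetT andbT.
  case/setU1P=> [->|/setDP[+ _]]; last by rewrite in_zdg_vertices_set => /andP[].
  by rewrite -card_gt0 cardsT.
have := laminar_card_le VWT lam; rewrite cardsU1 inE (negbTE TV) andbF cardsT.
rewrite cardsD (setIidPr WV) card_zdg_vertices_set //.
have := subset_leq_card WV; rewrite card_zdg_vertices_set //.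
have : 2 <= 2 ^ #|T| by rewrite (leq_exp2l 1).
rewrite -!subn1 /=; move: T_gt0; set t := #|T|; set k := #|W|; lia.
Qed.

Lemma strongly_resolves_refl A B : A \in V -> B \in V -> strongly_resolves V E A A B.
Proof.
move=> AV BV; have [q wq _] := exists_walk_le3 BV AV.
have [p sp] := exists_shortest_path wq; right; exists p; split=> //.
by case: sp => /and3P[_ /eqP <- _] _; apply: mem_last.
Qed.

Section ComplementOfLaminarFamily.
Variables (F : {set {set T}}) (t : T).
Hypotheses (T_gt2 : 2 < #|T|) (F_sub : F \subset V) (F_lam : laminar F)
  (F_t : {in F, forall A, t \in A -> #|A| = 1}).

Let resolved A B := exists2 X, X \in V :\: F & strongly_resolves V E X A B.

Let resolved_sym A B : resolved A B -> resolved B A.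
Proof. by case=> X XW /strongly_resolves_sym; exists X. Qed.

Let in_compl A : A \in V -> t \in A -> 1 < #|A| -> A \in V :\: F.
Proof.
move=> AV tA A_gt1; rewrite inE AV andbT.
by apply: contraTN A_gt1 => AF; rewrite (F_t AF tA).
Qed.

Let notin_F_gt1 A : A \in F -> 1 < #|A| -> t \notin A.
Proof. by move=> AF A_gt1; apply: contraTN A_gt1 => tA; rewrite (F_t AF tA). Qed.

Lemma resolved_disjoint_gt1 A B : A \in V -> B \in F -> [disjoint A & B] -> 1 < #|B| ->
  resolved A B.
Proof.
move=> AV BF dAB B_gt1; have BV := subsetP F_sub B BF; have tB := notin_F_gt1 BF B_gt1.
have [x [y [xB yB xy]]] := card_gt1P B_gt1.
have CV : B :\ x \in V.
  rewrite in_zdg_vertices_set; apply/andP; split.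
    by apply/set0Pn; exists y; rewrite !inE eq_sym xy yB.
  by apply: contraNneq tB => BxT; have /setD1P[] : t \in B :\ x by rewrite BxT.
have xt : x != t by apply: contraNneq tB => <-.
have XV : x |: ~: B \in V.
  rewrite in_zdg_vertices_set; apply/andP; split.
    by apply/set0Pn; exists x; apply: setU11.
  by apply: contraTneq yB => XT; have := in_setT y; rewrite -XT !inE eq_sym (negbTE xy).
have XW : x |: ~: B \in V :\: F.
  apply: in_compl => //; first by rewrite !inE tB orbT.
  by apply/card_gt1P; exists t, x; rewrite !inE eqxx tB orbT eq_sym xt.
exists (x |: ~: B) => //; right; exists [:: A; B :\ x; x |: ~: B].
split; last by rewrite !in_cons eqxx /= !orbT.
apply: shortest_path_disjoint3 => //.
- by rewrite disjoint_sym.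
- exact: disjointWr (subD1set B x) dAB.
- rewrite -setI_eq0; apply/eqP/setP=> z; rewrite !inE.
  by case: (z == x); case: (z \in B); rewrite ?andbF.
- by apply/negP=> /disjointFr/(_ xB); rewrite !inE eqxx.
- by apply/setP=> z; rewrite !inE; case: (z \in B); rewrite ?orbT.
Qed.

Lemma resolved_disjoint_singleton A B : A \in F -> B \in V -> [disjoint A & B] ->
  #|B| = 1 -> t \notin B -> resolved A B.
Proof.
move=> AF BV dAB B1 tB; have AV := subsetP F_sub A AF.
have XW : ~: B \in V :\: F.
  apply: in_compl; [exact: setC_zdg_vertex | by rewrite inE |].
  have := cardsC B; rewrite B1; move: T_gt2; set n := #|T|; lia.
have /set0Pn[z zA] := zdg_vertex_neq0 AV.
exists (~: B) => //; left; exists [:: B; ~: B]; split; last by rewrite !in_cons eqxx /= !orbT.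
apply: shortest_path_disjoint2; rewrite ?setC_zdg_vertex //.
- by rewrite disjoints_subset setCK.
- by apply: contraTneq AF => ->; case/setDP: XW.
- by apply/negP=> /disjointFr/(_ zA); rewrite inE (disjointFr dAB zA).
Qed.

Lemma resolved_nested A B : A \in F -> B \in F -> A != B -> A \subset B -> resolved A B.
Proof.
move=> AF BF AB sAB; have [AV BV] := (subsetP F_sub A AF, subsetP F_sub B BF).
have [x xB xA] : exists2 x, x \in B & x \notin A.
  by apply/subsetPn; apply: contra AB => sBA; rewrite eqEsubset sAB.
have /set0Pn[y yA] := zdg_vertex_neq0 AV.
have tB : t \notin B.
  apply: notin_F_gt1 => //; apply/card_gt1P; exists x, y; split=> //; first exact: subsetP yA.
  by apply: contraNneq xA => ->.
have tA : t \notin A := contra (subsetP sAB t) tB.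
have XW : ~: A \in V :\: F.
  apply: in_compl; [exact: setC_zdg_vertex | by rewrite inE tA |].
  by apply/card_gt1P; exists t, x; rewrite !inE tA xA; split=> //; apply: contraNneq tB => ->.
exists (~: A) => //; right; exists [:: ~: B; A; ~: A].
split; last by rewrite !in_cons eqxx /= !orbT.
apply: shortest_path_disjoint3; rewrite ?setC_zdg_vertex //.
- by rewrite disjoints_subset setCK.
- by rewrite disjoint_sym disjoints_subset setCK.
- by rewrite disjoints_subset setCK.
- by rewrite disjoints_subset setCK; apply/subsetPn; exists x.
- apply/setP=> z; rewrite !inE.
  by case: (boolP (z \in A)) => [/(subsetP sAB)->|]; rewrite ?orbT.
Qed.

Lemma resolved_in_F A B : A \in F -> B \in F -> A != B -> resolved A B.
Proof.
move=> AF BF AB; have [AV BV] := (subsetP F_sub A AF, subsetP F_sub B BF).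
have [dAB|mAB] := boolP [disjoint A & B]; last first.
  rewrite -setI_eq0 in mAB.
  have /orP[sAB|sBA] := F_lam AF BF mAB; first exact: resolved_nested.
  by apply/resolved_sym/resolved_nested; rewrite // eq_sym.
have card_gt1 C : C \in V -> #|C| != 1 -> 1 < #|C|.
  by move/zdg_vertex_neq0; rewrite -card_gt0; case: #|C| => [|[]].
have [B1|/(card_gt1 _ BV)] := eqVneq #|B| 1; last exact: resolved_disjoint_gt1.
have [A1|/(card_gt1 _ AV) A_gt1] := eqVneq #|A| 1; last first.
  by apply/resolved_sym/resolved_disjoint_gt1; rewrite // disjoint_sym.
have [tB|tB] := boolP (t \in B); last exact: resolved_disjoint_singleton.
apply/resolved_sym/resolved_disjoint_singleton => //; first by rewrite disjoint_sym.
by rewrite (disjointFl dAB tB).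
Qed.

Lemma strong_resolving_set_compl_laminar : strong_resolving_set V E (V :\: F).
Proof.
split=> [|A B AV BV AB]; first exact: subsetDl.
have [AF|AnF] := boolP (A \in F); last first.
  by exists A; [rewrite inE AnF | exact: strongly_resolves_refl].
have [BF|BnF] := boolP (B \in F); last first.
  by exists B; [rewrite inE BnF | exact/strongly_resolves_sym/strongly_resolves_refl].
exact: resolved_in_F.
Qed.

End ComplementOfLaminarFamily.
End SubsetGraph.

Section PrefixFamily.
Variable m : nat.
Local Notation T := 'I_m.+3.

Definition prefix (k : T) : {set T} := [set j : T | j < k].

(* The 2n - 2 vertices left out of the resolving set; [ord_max] lies in none of
   its members but the singleton [[set ord_max]]. *)
Definition prefix_family : {set {set T}} :=
  [set [set i] | i : T] :|: [set prefix k | k : T & 1 < k].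

Let ord1 : T := Ordinal (isT : 1 < m.+3).

Lemma prefix_subset (k1 k2 : T) : k1 <= k2 -> prefix k1 \subset prefix k2.
Proof. by move=> le_k; apply/subsetP=> j; rewrite !inE => /leq_trans; apply. Qed.

Lemma prefix_inj : injective prefix.
Proof.
have prefix_self k : k \notin prefix k by rewrite inE ltnn.
move=> k1 k2 e; apply/val_inj; case: (ltngtP k1 k2) => // lt_k.
  by move: (prefix_self k1); rewrite e inE lt_k.
by move: (prefix_self k2); rewrite -e inE lt_k.
Qed.

Lemma laminar_prefix_family : laminar prefix_family.
Proof.
have single_sub (i : T) B : [set i] :&: B != set0 -> [set i] \subset B.
  by case/set0Pn=> z /setIP[/set1P -> iB]; rewrite sub1set.
move=> A B /setUP[/imsetP[i _ ->]|/imsetP[k _ ->]] BF AB; first by rewrite single_sub.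
case/setUP: BF AB => /imsetP[j _ ->] AB.
  by rewrite single_sub ?orbT // setIC.
have [kj|jk] := leqP k j; first by rewrite prefix_subset.
by rewrite (prefix_subset (ltnW jk)) orbT.
Qed.

Lemma prefix_family_sub : prefix_family \subset zdg_vertices {set T}.
Proof.
apply/subsetP=> A; rewrite in_zdg_vertices_set => /setUP[/imsetP[i _ ->]|/imsetP[k]].
  apply/andP; split; first by apply/set0Pn; exists i; rewrite inE.
  by apply/negP=> /eqP iT; have := cards1 i; rewrite iT cardsT card_ord.
rewrite inE => k_gt1 ->; apply/andP; split.
  by apply/set0Pn; exists ord0; rewrite inE ltnW.
by apply/negP=> /eqP kT; have := in_setT (@ord_max m.+2); rewrite -kT inE ltnNge -ltnS ltn_ord.
Qed.

Lemma prefix_family_ord_max :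
  {in prefix_family, forall A : {set T}, ord_max \in A -> #|A| = 1}.
Proof.
move=> A /setUP[/imsetP[i _ ->] _|/imsetP[k _ ->]]; first exact: cards1.
by rewrite inE ltnNge -ltnS ltn_ord.
Qed.

Lemma card_prefix_family : #|prefix_family| = 2 * m.+3 - 2.
Proof.
have card_single : #|[set [set i] | i : T]| = m.+3.
  by rewrite card_imset ?card_ord //; apply: set1_inj.
have card_prefix : #|[set prefix k | k : T & 1 < k]| = m.+1.
  rewrite card_imset; last exact: prefix_inj.
  have -> : [set k : T | 1 < k] = ~: [set ord0; ord1].
    by apply/setP=> -[[|[|k]] lt_k]; rewrite !inE -!val_eqE.
  by have := cardsC [set ord0; ord1]; rewrite cards2 card_ord /=; lia.
have disj : [set [set i] | i : T] :&: [set prefix k | k : T & 1 < k] = set0.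
  apply/setP=> A; rewrite !inE; apply/negP=> /andP[/imsetP[i _ ->] /imsetP[k]].
  rewrite inE => k_gt1 e_ik; move/setP/(_ ord0): (e_ik); rewrite !inE ltnW // => /eqP i0.
  by move/setP/(_ ord1): e_ik; rewrite !inE -i0 k_gt1.
have := cardsUI [set [set i] | i : T] [set prefix k | k : T & 1 < k].
by rewrite disj cards0 card_single card_prefix addn0 => ->; lia.
Qed.

End PrefixFamily.

Theorem is_sdim_zdg_subsets m :
  is_sdim (zdg_vertices {set 'I_m.+3}) (zdg_adj {set 'I_m.+3}) (2 ^ m.+3 - 2 * m.+3).
Proof.
have T_gt2 : 2 < #|'I_m.+3| by rewrite card_ord.
have F_sub := prefix_family_sub m.
split=> [|W /strong_resolving_set_card_ge]; last by rewrite card_ord; apply.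
exists (zdg_vertices {set 'I_m.+3} :\: prefix_family m); split.
  exact: (strong_resolving_set_compl_laminar T_gt2 F_sub (@laminar_prefix_family m)
    (@prefix_family_ord_max m)).
rewrite cardsD (setIidPr F_sub) card_zdg_vertices_set card_ord ?card_prefix_family //.
have : 2 * m.+3 <= 2 ^ m.+3 by elim: m {T_gt2 F_sub} => // k IH; rewrite expnS; lia.
lia.
Qed.

Theorem mainTheorem12 (n : nat) (d : Order.disp_t) (L : finTBLatticeType d)
  (f : L -> {set 'I_n}) :
  3 <= n ->
  bijective f ->
  (forall x y : L, (x <= y)%O = (f x \subset f y)) ->
  is_sdim (zdg_vertices L) (zdg_adj L) (2 ^ n - 2 * n).
Proof.
move=> n_ge3 f_bij f_mono.
apply: (is_sdim_zdg_order_iso f_bij (fun x y => esym (f_mono x y))).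
by clear f f_bij f_mono; case: n n_ge3 => [|[|[|m]]] // _; apply: is_sdim_zdg_subsets.
Qed.
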